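(* Let $X$ be a set and let ${}^{*}X$ be a topological extension of $X$. Then: (1) ${}^{*}X$ satisfies the principle Ind if and only if ${}^{*}X$ is a Hausdorff space; (2) ${}^{*}X$ satisfies the principle Poss if and only if the $S$-topology of ${}^{*}X$ is quasi-compact; (3) ${}^{*}X$ satisfies both Ind and Poss if and only if the $S$-topology of ${}^{*}X$ is compact (i.e. Hausdorff and quasi-compact). Consequently, in this case either ${}^{*}X$ (with its original topology) is compact, or ${}^{*}X$ is not regular, and then the coarser $S$-topology on ${}^{*}X$ is compact and every ${}^{*}f$ (for $f:X\to X$) is still continuous with respect to the $S$-topology.
   Context: A topological extension of a set $X$ is a $T_1$ topological space ${}^{*}X$ containing $X$ as a discrete dense subspace, together with an assignment to each function $f:X\to X$ of a continuous map ${}^{*}f:{}^{*}X\to{}^{*}X$ extending $f$, such that (c) ${}^{*}g\circ{}^{*}f={}^{*}(g\circ f)$ for all $f,g:X\to X$, and (i) if $f(x)=x$ for all $x\in A\subseteq X$, then ${}^{*}f(\xi)=\xi$ for all $\xi$ in the closure $\overline{A}$ of $A$ in ${}^{*}X$. For $A\subseteq X$ write ${}^{*}A=\overline{A}$ (the closure of $A$ in ${}^{*}X$; it is clopen). The $S$-topology on ${}^{*}X$ is the topology generated by the sets ${}^{*}A$, $A\subseteq X$. Principle Ind: for any two distinct $\xi,\eta\in{}^{*}X$ there is $A\subseteq X$ with $\xi\in{}^{*}A$ and $\eta\notin{}^{*}A$. Principle Poss: for every family $\mathcal F$ of subsets of $X$, if $\bigcap_{A\in\mathcal F}{}^{*}A=\emptyset$,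 then there are finitely many $A_1,\dots,A_n\in\mathcal F$ with $A_1\cap\dots\cap A_n=\emptyset$. ''Compact'' means Hausdorff and quasi-compact. *)

From HB Require Import structures.
From mathcomp Require Import all_boot all_order.
From mathcomp Require Import all_classical all_reals all_analysis.
Set Implicit Arguments. Unset Strict Implicit. Unset Printing Implicit Defensive.
Local Open Scope classical_set_scope.

Section TopExt.
Context {X : Type} {T : topologicalType}.

Definition star_set (e : X -> T) (A : set X) : set T := closure (e @` A).

Definition is_topological_extension (e : X -> T) (star : (X -> X) -> T -> T)
  : Prop :=
  [/\ accessible_space T,
      injective e,
      (forall x : X, exists U : set T,
          open U /\ U `&` range e = [set e x])
    & dense (range e)] /\
  [/\ (forall f : X -> X, continuous (star f)),
      (forall (f : X -> X) (x : X), star f (e x) = e (f x)),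
      (forall f g : X -> X, star g \o star f = star (g \o f))
    & (forall (f : X -> X) (A : set X), (forall x, A x -> f x = x) ->
        forall xi : T, star_set e A xi -> star f xi = xi) ].

Definition Ind (e : X -> T) : Prop :=
  forall xi eta : T, xi <> eta ->
    exists A : set X, star_set e A xi /\ ~ star_set e A eta.

Definition Poss (e : X -> T) : Prop :=
  forall F : set (set X),
    \bigcap_(A in F) star_set e A = set0 ->
    exists s : seq (set X),
      (forall A, A \in s -> F A) /\ \bigcap_(A in [set` s]) A = set0.

(** the carrier of ^*X equipped with the S-topology, i.e. the topology
    generated by the sets ^*A, A ⊆ X *)
Definition S_top (e : X -> T) : Type := T.
End TopExt.

HB.instance Definition _ (X : Type) (T : topologicalType) (e : X -> T) :=
  Choice.on (S_top e).
HB.instance Definition _ (X : Type) (T : topologicalType) (e : X -> T) :=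
  @isSubBaseTopological.Build (S_top e) (set X) setT
    (fun A : set X => (star_set e A : set (S_top e))).

From HB Require Import structures.
From mathcomp Require Import all_boot all_order.
From mathcomp Require Import all_classical all_reals all_analysis.
From mathcomp Require Import finmap.
Local Open Scope classical_set_scope.

(* If a point lay in both ^*A and ^*(~A), the map f sending A to a and ~A to
   b <> a would, by continuity of ^*f, send it into closure {a} ∩ closure {b},
   which is {a} ∩ {b} = ∅ in a T_1 space.  So ^*(~A) is the complement of ^*A:
   the ^*A are clopen, closed under finite intersections, and form a base of
   the S-topology, which is therefore coarser than the topology of ^*X.
   Ind says that this base separates points, which makes the S-topology
   Hausdorff, hence also ^*X; conversely, disjoint open U ∋ ξ, V ∋ η give
   ξ ∈ ^*(U ∩ X) ⊆ closure U, which misses η.  Poss is the finite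
   intersection property of the closed base {^*A}, i.e. compactness of the
   S-topology.  In a regular ^*X every neighbourhood of ξ contains the closure
   of an open U ∋ ξ, hence the S-neighbourhood ^*(U ∩ X), so S-cluster points
   of filters are cluster points. *)

Lemma dense_closureT (T : topologicalType) (S : set T) :
  dense S -> closure S = setT.
Proof.
move=> dS; apply/seteqP; split => // p _ B; rewrite nbhsE => -[U [oU Up] UB].
have [|t [Ut St]] := dS U _ oU; first by exists p.
by exists t; split => //; exact: UB.
Qed.

Lemma image_closure_subset {T U : topologicalType} {f : T -> U} (B : set T) :
  continuous f -> f @` closure B `<=` closure (f @` B).
Proof.
move=> cf _ [p pB <-] N /cf /pB [q [Bq Nq]].
by exists (f q); split => //; exists q.
Qed.

Lemma hausdorff_injective_continuous {T U : topologicalType} {f : T -> U} :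
  injective f -> continuous f -> hausdorff_space U -> hausdorff_space T.
Proof.
move=> fI cf hU p q clpq; apply: fI; apply: hU => A B /cf Ap /cf Bq.
by have [z [Az Bz]] := clpq _ _ Ap Bq; exists (f z).
Qed.

Section TopologicalExtension.
Context {X : Type} {T : topologicalType} {e : X -> T}
  {star : (X -> X) -> T -> T} (He : is_topological_extension e star).

Let T1 : accessible_space T. Proof. by case: He => -[]. Qed.
Let e_inj : injective e. Proof. by case: He => -[]. Qed.
Let e_dense : dense (range e). Proof. by case: He => -[]. Qed.
Let star_cont f : continuous (star f). Proof. by case: He => _ []. Qed.
Let star_e f x : star f (e x) = e (f x). Proof. by case: He => _ []. Qed.

Lemma star_setT : star_set e setT = setT.
Proof. exact: dense_closureT. Qed.

Lemma star_set0 : star_set e set0 = set0.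
Proof. by rewrite /star_set image_set0 closure0. Qed.

Lemma star_setS A B : A `<=` B -> star_set e A `<=` star_set e B.
Proof. by move=> AB; apply/closureS/image_subset. Qed.

Lemma star_setUv A : star_set e A `|` star_set e (~` A) = setT.
Proof. by rewrite /star_set -closureU -image_setU setUv; exact: star_setT. Qed.

Lemma star_set_cst f A a : (forall x, A x -> f x = a) ->
  forall p, star_set e A p -> star f p = e a.
Proof.
move=> fA p pA.
suff : closure [set e a] (star f p).
  by rewrite -(closure_id _).1 //; exact: accessible_closed_set1.
apply: (@closureS _ (star f @` (e @` A))).
  by move=> _ [_ [x Ax <-] <-]; rewrite star_e fA.
exact/(image_closure_subset _ (star_cont f))/imageP.
Qed.

Lemma star_setIv A : star_set e A `&` star_set e (~` A) = set0.
Proof.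
apply/seteqP; split => // p [pA pnA].
have [[a Aa]|/forallNP A0] := pselect (exists a, A a); last first.
  by move: pA; rewrite (_ : A = set0) ?star_set0 //; apply/seteqP; split.
have [[b nAb]|/forallNP nA0] := pselect (exists b, ~ A b); last first.
  by move: pnA; rewrite (_ : ~` A = set0) ?star_set0 //; apply/seteqP; split.
pose f x := if pselect (A x) then a else b.
have fpa : star f p = e a.
  apply: (@star_set_cst f A a _ p pA) => x Ax.
  by rewrite /f; case: pselect.
have fpb : star f p = e b.
  apply: (@star_set_cst f (~` A) b _ p pnA) => x nAx.
  by rewrite /f; case: pselect.
have /e_inj ab : e a = e b by rewrite -fpa -fpb.
by apply: nAb; rewrite -ab.
Qed.

Lemma star_setC A : star_set e (~` A) = ~` star_set e A.
Proof.
apply/seteqP; split => p.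
  by move=> pnA pA; have : set0 p by rewrite -(star_setIv A).
by move=> npA; have : setT p by []; rewrite -(star_setUv A) => -[].
Qed.

Lemma open_star_set A : open (star_set e A).
Proof. by rewrite -[A]setCK star_setC openC; exact: closed_closure. Qed.

Lemma preimage_star_set A : e @^-1` star_set e A = A.
Proof.
apply/seteqP; split => x; last by move=> Ax; apply/subset_closure/imageP.
move=> xA; apply: contrapT => nAx.
have : (star_set e A `&` star_set e (~` A)) (e x).
  by split => //; apply/subset_closure/imageP.
by rewrite star_setIv.
Qed.

Lemma star_setI A B : star_set e (A `&` B) = star_set e A `&` star_set e B.
Proof.
apply/seteqP; split => [p pAB|p [pA pB] N pN].
  by split; move: pAB; apply: star_setS => x [].
have [_ [[b Bb <-] [Nb Ab]]] : e @` B `&` (N `&` star_set e A) !=set0.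
  apply/pB/filterI => //.
  by apply: open_nbhs_nbhs; split => //; exact: open_star_set.
exists (e b); split => //; exists b => //; split => //.
by rewrite -(preimage_star_set A).
Qed.

Lemma star_set_bigI (s : seq (set X)) :
  star_set e (\big[setI/setT]_(A <- s) A) =
  \big[setI/setT]_(A <- s) star_set e A.
Proof. exact: (big_morph _ star_setI star_setT). Qed.

Lemma star_set_preimage f A :
  star f @^-1` star_set e A = star_set e (f @^-1` A).
Proof.
have sub B : star_set e (f @^-1` B) `<=` star f @^-1` star_set e B.
  move=> p pB; apply: (@closureS _ (star f @` (e @` (f @^-1` B)))).
    by move=> _ [_ [x Bx <-] <-]; rewrite star_e; exact: imageP.
  exact/(image_closure_subset _ (star_cont f))/imageP.
apply/seteqP; split => p; last exact: sub.
move=> pA; have : setT p by []; rewrite -(star_setUv (f @^-1` A)) => -[//|].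
by rewrite preimage_setC => /sub; rewrite /preimage star_setC => /(_ pA).
Qed.

Lemma open_subset_star_preimage U : open U -> U `<=` star_set e (e @^-1` U).
Proof.
move=> oU p Up N; rewrite nbhsE => -[V [oV Vp] VN].
have [|t [[Ut Vt] [x _ ex]]] := e_dense (U `&` V) _ (openI oU oV).
  by exists p.
by exists t; split; [exists x => //; rewrite -ex in Ut | exact: VN].
Qed.

Lemma star_preimage_subset_closure U : star_set e (e @^-1` U) `<=` closure U.
Proof. by apply: closureS; exact: image_preimage_subset. Qed.

Lemma open_S_star_set A : open (star_set e A : set (S_top e)).
Proof.
exists [set star_set e A]; last by rewrite bigcup_set1.
by move=> _ ->; exact: finI_from1.
Qed.

Lemma S_nbhsP (p : S_top e) (N : set (S_top e)) :
  nbhs p N <-> exists A, star_set e A p /\ star_set e A `<=` N.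
Proof.
split => [|[A [pA AN]]]; last first.
  rewrite nbhsE; exists (star_set e A) => //.
  by split => //; exact: open_S_star_set.
rewrite nbhsE => -[B [[D sD <-{B}] [i Di ip]] DN].
have [J _ Ji] := sD i Di.
rewrite bigcap_fset -star_set_bigI in Ji; subst i.
eexists; split; first exact: ip.
by move=> q iq; apply: DN; eexists; [exact: Di|exact: iq].
Qed.

Lemma continuous_id_S : continuous (id : T -> S_top e).
Proof.
move=> p N /S_nbhsP [A [pA AN]]; apply: filterS AN _.
by apply: open_nbhs_nbhs; split => //; exact: open_star_set.
Qed.

Lemma Ind_hausdorff_S : Ind e -> hausdorff_space (S_top e).
Proof.
rewrite open_hausdorff => Ie p q /eqP pq; have [A [pA qA]] := Ie p q pq.
exists ((star_set e A : set (S_top e)), (star_set e (~` A) : set (S_top e))).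
  by rewrite !in_setE star_setC.
by split; [exact: open_S_star_set|exact: open_S_star_set|rewrite star_setIv].
Qed.

Lemma hausdorff_Ind : hausdorff_space T -> Ind e.
Proof.
rewrite open_hausdorff => hT p q /eqP /hT [[U V] /=].
rewrite !in_setE => -[pU qV] [oU oV UV0].
exists (e @^-1` U); split; first exact: open_subset_star_preimage.
move=> /star_preimage_subset_closure.
move=> /(_ V (open_nbhs_nbhs (conj oV qV))) [z UVz].
by rewrite UV0 in UVz.
Qed.

Lemma hausdorff_S_hausdorff : hausdorff_space (S_top e) -> hausdorff_space T.
Proof. by apply: (hausdorff_injective_continuous _ continuous_id_S). Qed.

Lemma IndP : Ind e <-> hausdorff_space T.
Proof.
by split=> [/Ind_hausdorff_S/hausdorff_S_hausdorff|/hausdorff_Ind].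
Qed.

Lemma Ind_SP : Ind e <-> hausdorff_space (S_top e).
Proof.
by split=> [/Ind_hausdorff_S|/hausdorff_S_hausdorff/hausdorff_Ind].
Qed.

Lemma Poss_compact_S : Poss e -> compact [set: S_top e].
Proof.
move=> Pe F PF _; pose G := [set A | F (star_set e A)].
have [p Gp] : \bigcap_(A in G) star_set e A !=set0.
  apply/set0P/negP => /eqP /Pe [s [sG s0]].
  have : F (\big[setI/setT]_(A <- s) star_set e A).
    rewrite big_seq; apply: big_ind; [exact: filterT|exact: filterI|exact: sG].
  by rewrite -star_set_bigI -bigcap_seq s0 star_set0 => /filter_not_empty.
exists p; split => // B N FB /S_nbhsP [C [pC CN]].
apply/set0P/negP => /eqP BN0.
have /Gp : G (~` C).
  apply: filterS FB => q Bq; rewrite star_setC => qC.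
  by have : set0 q by rewrite -BN0; split => //; exact: CN.
by rewrite star_setC.
Qed.

Lemma compact_S_Poss : compact [set: S_top e] -> Poss e.
Proof.
move=> cS G G0; apply: contrapT => nP.
have finIG : finI G (fun A => star_set e A : set (S_top e)).
  move=> J JG; have [x Jx] : \bigcap_(A in [set` J]) A !=set0.
    apply/set0P/negP => /eqP J0; apply: nP.
    by exists J; split => // A /JG /set_mem.
  by exists (e x) => A AJ; apply: subset_closure; exists x => //; exact: Jx.
have PG := finI_filter finIG.
have [p [_ clp]] := cS _ PG filterT.
suff : (\bigcap_(A in G) star_set e A) p by rewrite G0.
move=> A GA; have : setT p by []; rewrite -(star_setUv A) => -[//|pnA].
have [q [qA qnA]] : star_set e A `&` star_set e (~` A) !=set0.
  apply: clp; first by exists (star_set e A) => //; exact: finI_from1.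
  by apply/S_nbhsP; exists (~` A); split.
by have : set0 q by rewrite -(star_setIv A).
Qed.

Lemma PossP : Poss e <-> compact [set: S_top e].
Proof. by split=> [/Poss_compact_S|/compact_S_Poss]. Qed.

Lemma regular_compact_S : regular_space T -> compact [set: S_top e] ->
  compact [set: T].
Proof.
move=> rT cS F PF _; have [p [_ clp]] := cS F PF filterT.
exists p; split => // B N FB /rT [V pV VN].
apply: clp FB _; apply/S_nbhsP; move: pV; rewrite nbhsE => -[U [oU pU] UV].
exists (e @^-1` U); split; first exact: open_subset_star_preimage.
by move=> q /star_preimage_subset_closure /(closureS UV) /VN.
Qed.

Lemma continuous_star_S f : continuous (star f : S_top e -> S_top e).
Proof.
move=> p N /S_nbhsP [A [pA AN]]; apply/S_nbhsP.
by exists (f @^-1` A); rewrite -star_set_preimage; split => // q /AN.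
Qed.

End TopologicalExtension.

Theorem corollary1p3 (X : Type) (T : topologicalType) (e : X -> T)
    (star : (X -> X) -> T -> T) :
  is_topological_extension e star ->
  (Ind e <-> hausdorff_space T) /\
  (Poss e <-> compact [set: S_top e]) /\
  ((Ind e /\ Poss e) <->
     (hausdorff_space (S_top e) /\ compact [set: S_top e])) /\
  (Ind e /\ Poss e ->
     ((hausdorff_space T /\ compact [set: T]) \/ ~ @regular_space T) /\
     (hausdorff_space (S_top e) /\ compact [set: S_top e]) /\
     (forall f : X -> X, continuous (star f : S_top e -> S_top e))).
Proof.
move=> He; have hS := Ind_SP He; have hP := PossP He.
split; first exact: IndP He.
split; first exact: hP.
split; first tauto.
move=> [/hS SH /hP SC]; split; last by split=> //; exact: continuous_star_S He.
have [rT|] := pselect (regular_space T); last by right.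
left; split; first exact: hausdorff_S_hausdorff He SH.
exact: regular_compact_S He rT SC.
Qed.
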